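(* Let $n$ and $k$ be positive integers, let $E_{k}:=\{(i,j)\in\mathbb{Z}^{2}:|j-i|\geq k+1\}$, and let $h:\{0,1,\ldots,n-1\}\to\mathbb{R}$ be a nonincreasing function. Let $u:\{1,\ldots,n\}\to\mathbb{Z}$ be any function and let $Mu$ be its nondecreasing rearrangement. Then \[ \mathcal{H}(h,E_{k},u)\geq\mathcal{H}(h,E_{k},Mu). \]
   Context: For a function $u:\{1,\ldots,n\}\to\mathbb{Z}$, a symmetric set $E\subseteq\mathbb{Z}^{2}$ (i.e. $(i,j)\in E$ iff $(j,i)\in E$) and $h:\{0,\ldots,n-1\}\to\mathbb{R}$, define $J(E,u):=\{(x,y)\in\{1,\ldots,n\}^{2}:x\leq y,\ (u(x),u(y))\in E\}$ (pairs with $x=y$ are allowed) and $\mathcal{H}(h,E,u):=\sum_{(x,y)\in J(E,u)}h(y-x)$. The nondecreasing rearrangement of $u$ is $Mu:\{1,\ldots,n\}\to\mathbb{Z}$, $Mu(x):=\min\{j\in\mathbb{Z}:|\{y\in\{1,\ldots,n\}:u(y)\leq j\}|\geq x\}$, where $|A|$ is the cardinality of $A$. *)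

From mathcomp Require Import all_boot all_order all_algebra.
From mathcomp Require Import reals.
Set Implicit Arguments. Unset Strict Implicit. Unset Printing Implicit Defensive.
Import Order.TTheory GRing.Theory Num.Theory.
Local Open Scope ring_scope.

(* Functions on {1,...,n} are represented as total functions on nat;
   only their values on 1..n matter. *)

Definition Ek (k : nat) (i j : int) : bool := ((k.+1)%:Z <= `|j - i|).

Definition symmetric_set (E : int -> int -> bool) : Prop :=
  forall i j, E i j = E j i.

Definition J (n : nat) (E : int -> int -> bool) (u : nat -> int)
  : seq (nat * nat) :=
  [seq p <- [seq (x, y) | x <- iota 1 n, y <- iota 1 n]
     | (p.1 <= p.2)%N && E (u p.1) (u p.2)].

Definition Hfun (R : realType) (n : nat) (h : nat -> R)
  (E : int -> int -> bool) (u : nat -> int) : R :=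
  \sum_(p <- J n E u) h (p.2 - p.1)%N.

Definition cnt_le (n : nat) (u : nat -> int) (j : int) : nat :=
  count (fun y => u y <= j) (iota 1 n).

(* Mu(x) = min {j in Z : |{y : u y <= j}| >= x}; v is the nondecreasing
   rearrangement of u when v x is that minimum for every x in {1..n}. *)
Definition is_min_int (P : int -> Prop) (m : int) : Prop :=
  P m /\ forall j, P j -> m <= j.

Definition is_Mu (n : nat) (u v : nat -> int) : Prop :=
  forall x : nat, (1 <= x <= n)%N ->
    is_min_int (fun j => (x <= cnt_le n u j)%N) (v x).

From mathcomp Require Import all_boot all_order all_algebra.
From mathcomp Require Import reals.
From mathcomp Require Import zify ring.
Set Implicit Arguments. Unset Strict Implicit. Unset Printing Implicit Defensive.
Import Order.TTheory GRing.Theory Num.Theory.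

(* Call x < y a close pair of v when |v y - v x| <= k, i.e. (v x, v y) is
   not in E_k, and let N_t(v) count the close pairs with y - x <= t.  Since
   h is nonincreasing, h d = h (n-1) + sum_(d <= t < n-1) (h t - h (t+1)),
   so H(h, E_k, v) is a constant minus h (n-1) N_n(v) minus a nonnegative
   combination of the N_t(v).  It therefore suffices to show
   N_t(u) <= N_t(Mu) for every t, with equality when n <= t.

   Both claims follow by induction on n, removing a position p where u
   attains its maximum M, and the last position from Mu, whose value there
   is M as well.  If K positions carry a value close to M, then in Mu they
   are the K positions just before the last one, so Mu loses min(t, K) close
   pairs.  In u, the L + R close pairs through p within distance t are lost,
   while the G close pairs (x, y) with x < p < y and y - x = t + 1 come
   within distance t.  Clearly L + R <= K, and L + R <= t + G: for
   1 <= d <= t, if both p - d and p + t + 1 - d are close to p, they are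
   close to each other, as both values lie in [M - k, M]. *)

Lemma big_iota_pred1 (F : nat -> nat) a N : 1 <= a <= N ->
  \sum_(X <- iota 1 N) (X == a) * F X = F a.
Proof.
move=> Ha; transitivity (\sum_(X <- iota 1 N | X == a) F X).
  by rewrite [RHS]big_mkcond; apply: eq_bigr => X _; case: eqP; rewrite ?mul1n.
rewrite -big_filter.
have -> : [seq X <- iota 1 N | X == a] = [:: a].
  by apply: filter_pred1_uniq; rewrite ?iota_uniq ?mem_iota; lia.
by rewrite big_seq1.
Qed.

Lemma big_iota_pred1_cond a N (b : bool) (F : nat -> nat) : (b -> 1 <= a <= N) ->
  \sum_(X <- iota 1 N) (X == a) * (b * F X) = b * F a.
Proof.
case: b => [Ha | _]; last by rewrite big1 // => X _; rewrite muln0.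
by under eq_bigr do rewrite mul1n; rewrite mul1n big_iota_pred1 //; apply: Ha.
Qed.

Lemma count_sum_nat (a : pred nat) s : count a s = \sum_(x <- s) a x.
Proof. by elim: s => [|x s IH]; rewrite ?big_nil ?big_cons //= IH. Qed.

Lemma sum_negb (b : nat -> bool) s :
  \sum_(x <- s) ~~ b x = size s - \sum_(x <- s) b x.
Proof.
have : \sum_(x <- s) ~~ b x + \sum_(x <- s) b x = size s.
  by rewrite -big_split -sum1_size; apply: eq_bigr => x _; case: (b x).
lia.
Qed.

Lemma iota1S n : iota 1 n.+1 = iota 1 n ++ [:: n.+1].
Proof. by rewrite -(addn1 n) iotaD /= add1n addn1. Qed.

Lemma sum_iota_leq c n : \sum_(x <- iota 1 n) (x <= c) = minn n c.
Proof.
elim: n => [|n IH]; first by rewrite big_nil min0n.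
rewrite iota1S big_cat big_seq1 IH /=; lia.
Qed.

Lemma sum_iota_rev t (F : nat -> nat) :
  \sum_(d <- iota 1 t) F d = \sum_(d <- iota 1 t) F (t.+1 - d).
Proof.
have -> : iota 1 t = index_iota 1 t.+1 by rewrite /index_iota subSS subn0.
by rewrite big_nat_rev; apply: eq_big_nat => d Hd; congr F; lia.
Qed.

Lemma map_bump_iota p m : 1 <= p <= m.+1 ->
  map (bump p) (iota 1 m) = [seq X <- iota 1 m.+1 | X != p].
Proof.
move=> Hp.
have E1 : m = p.-1 + (m.+1 - p) by lia.
have E2 : m.+1 = p.-1 + (m.+1 - p).+1 by lia.
rewrite {1}E1 {2}E2 !iotaD map_cat filter_cat (_ : 1 + p.-1 = p); last lia.
rewrite /= eqxx; congr (_ ++ _).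
  have -> : map (bump p) (iota 1 p.-1) = iota 1 p.-1.
    by rewrite -[RHS]map_id; apply/eq_in_map => x; rewrite mem_iota /bump; lia.
  by apply/esym/all_filterP/allP => x; rewrite mem_iota => Hx; apply/eqP; lia.
have -> : map (bump p) (iota p (m.+1 - p)) = iota p.+1 (m.+1 - p).
  by rewrite -[p.+1]add1n iotaDl; apply/eq_in_map => x; rewrite mem_iota /bump; lia.
by apply/esym/all_filterP/allP => x; rewrite mem_iota => Hx; apply/eqP; lia.
Qed.

Lemma big_bump_iota p m (F : nat -> nat) : 1 <= p <= m.+1 ->
  \sum_(x <- iota 1 m) F (bump p x) = \sum_(X <- iota 1 m.+1) (X != p) * F X.
Proof.
move=> Hp; rewrite -(big_map (bump p) xpredT F) map_bump_iota // big_filter.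
by rewrite big_mkcond; apply: eq_bigr => X _; case: (X != p); rewrite ?mul1n.
Qed.

Lemma sum_iota_window_left N p t (F : nat -> nat) : p <= N.+1 ->
  \sum_(X <- iota 1 N) (X < p) * (p - X <= t) * F X
  = \sum_(d <- iota 1 t) (d < p) * F (p - d).
Proof.
move=> Hp; elim: t => [|t IH].
  by rewrite big_nil big1_seq // => X; rewrite mem_iota; lia.
rewrite iota1S big_cat big_seq1 /= -IH.
rewrite (eq_big_seq (fun X => (X < p) * (p - X <= t) * F X
                              + (X == p - t.+1) * ((t.+1 < p) * F X))).
  by rewrite big_split /= big_iota_pred1_cond //; lia.
by move=> X; rewrite mem_iota => HX; rewrite mulnA -mulnDl; congr (_ * _); lia.
Qed.

Lemma sum_iota_window_right N p t (F : nat -> nat) : 1 <= p ->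
  \sum_(Y <- iota 1 N) (p < Y) * (Y - p <= t) * F Y
  = \sum_(d <- iota 1 t) (p + d <= N) * F (p + d).
Proof.
move=> Hp; elim: t => [|t IH].
  by rewrite big_nil big1_seq // => Y; rewrite mem_iota; lia.
rewrite iota1S big_cat big_seq1 /= -IH.
rewrite (eq_big_seq (fun Y => (p < Y) * (Y - p <= t) * F Y
                              + (Y == p + t.+1) * ((p + t.+1 <= N) * F Y))).
  by rewrite big_split /= big_iota_pred1_cond //; lia.
by move=> Y; rewrite mem_iota => HY; rewrite mulnA -mulnDl; congr (_ * _); lia.
Qed.

Lemma Ek_sym k : symmetric_set (Ek k).
Proof. by move=> i j; rewrite /Ek distrC. Qed.

Lemma Ek_xx k (a : int) : Ek k a a = false.
Proof. by rewrite /Ek subrr normr0. Qed.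

Lemma Ek_le k (a M : int) : (a <= M)%R -> Ek k a M = (a <= M - (k.+1)%:Z)%R.
Proof. by move=> H; rewrite /Ek ger0_norm ?subr_ge0 //; lia. Qed.

Lemma nEk_trans_le k (a b M : int) : (a <= M)%R -> (b <= M)%R ->
  ~~ Ek k a M -> ~~ Ek k b M -> ~~ Ek k a b.
Proof. by move=> Ha Hb; rewrite (Ek_le k Ha) (Ek_le k Hb) /Ek; case: (lerP a b); lia. Qed.

Lemma cnt_le_mono n u : {homo cnt_le n u : j j' / (j <= j')%R >-> j <= j'}.
Proof. by move=> j j' H; apply: sub_count => x /= Hx; apply: le_trans Hx H. Qed.

Lemma cnt_le_size n u j : cnt_le n u j <= n.
Proof. by rewrite /cnt_le (leq_trans (count_size _ _)) ?size_iota. Qed.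

Lemma is_Mu_leE n u g x j : is_Mu n u g -> 1 <= x <= n ->
  (g x <= j)%R = (x <= cnt_le n u j).
Proof.
move=> HM /HM[/= Hx Hmin]; apply/idP/idP; last exact: Hmin.
by move=> /(cnt_le_mono n u); apply: leq_trans.
Qed.

Lemma exists_argmax (f : nat -> int) m : exists2 p, 1 <= p <= m.+1 &
  forall x, 1 <= x <= m.+1 -> (f x <= f p)%R.
Proof.
elim: m => [|m [p Hp Hmax]]; first by exists 1 => // x Hx; have -> : x = 1 by lia.
have [Hle | Hlt] := lerP (f p) (f m.+2).
  exists m.+2 => [|x Hx]; first lia.
  have [/eqP -> //|Hxm] := boolP (x == m.+2).
  by apply: le_trans Hle; apply: Hmax; lia.
exists p => [|x Hx]; first lia.
have [/eqP -> |Hxm] := boolP (x == m.+2); first exact: ltW.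
by apply: Hmax; lia.
Qed.

Lemma cnt_le_bump m f p j : 1 <= p <= m.+1 ->
  cnt_le m.+1 f j = cnt_le m (f \o bump p) j + (f p <= j)%R.
Proof.
move=> Hp; rewrite /cnt_le !count_sum_nat /=.
rewrite (big_bump_iota (fun X => nat_of_bool (f X <= j)%R) Hp).
rewrite -(big_iota_pred1 (fun X => nat_of_bool (f X <= j)%R) Hp) -big_split /=.
by apply: eq_bigr => X _; case: eqP => _ /=; lia.
Qed.

Definition close k (v : nat -> int) x y : bool := ~~ Ek k (v x) (v y).

Definition nclose k t n (v : nat -> int) : nat :=
  \sum_(x <- iota 1 n) \sum_(y <- iota 1 n) ((x < y) * (y - x <= t) * close k v x y).

Lemma eq_nclose k t n v1 v2 : {in [pred x | 1 <= x <= n], v1 =1 v2} ->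
  nclose k t n v1 = nclose k t n v2.
Proof.
move=> E; apply: eq_big_seq => X; rewrite mem_iota => HX.
by apply: eq_big_seq => Y; rewrite mem_iota => HY; rewrite /close !E ?inE //; lia.
Qed.

Lemma window_indicator_split (X Y p t : nat) (b : bool) :
  (X < Y) * (Y - X <= t) * b + (X < p) * (p < Y) * (Y - X == t.+1) * b
  = (X != p) * ((Y != p) * ((X < Y) * (Y - X - ((X < p) && (p < Y)) <= t) * b))
    + (Y == p) * ((X < Y) * (Y - X <= t) * b) + (X == p) * ((X < Y) * (Y - X <= t) * b).
Proof. by case: b; rewrite ?muln0 ?muln1 //; lia. Qed.

(* Removing position p shortens the distance of the pairs straddling p by
   one; those at distance t + 1 are the ones entering the window. *)
Lemma nclose_bump k f t m p : 1 <= p <= m.+1 ->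
  nclose k t m.+1 f +
  \sum_(X <- iota 1 m.+1) \sum_(Y <- iota 1 m.+1)
     ((X < p) * (p < Y) * (Y - X == t.+1) * close k f X Y)
  = nclose k t m (f \o bump p) +
    \sum_(X <- iota 1 m.+1) ((X < p) * (p - X <= t) * close k f X p) +
    \sum_(Y <- iota 1 m.+1) ((p < Y) * (Y - p <= t) * close k f p Y).
Proof.
move=> Hp; rewrite /nclose.
set T := fun X Y => (X < Y) * (Y - X - ((X < p) && (p < Y)) <= t) * close k f X Y.
set W := fun X Y => (X < Y) * (Y - X <= t) * close k f X Y.
have -> : \sum_(x <- iota 1 m) \sum_(y <- iota 1 m)
    ((x < y) * (y - x <= t) * close k (f \o bump p) x y)
   = \sum_(X <- iota 1 m.+1) (X != p) * \sum_(Y <- iota 1 m.+1) ((Y != p) * T X Y).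
  rewrite -(big_bump_iota (fun X => \sum_(Y <- iota 1 m.+1) (Y != p) * T X Y) Hp).
  apply: eq_bigr => x _; rewrite -big_bump_iota //; apply: eq_bigr => y _.
  by rewrite /T /close /bump; congr (_ * _ * _); lia.
have -> : \sum_(X <- iota 1 m.+1) ((X < p) * (p - X <= t) * close k f X p)
    = \sum_(X <- iota 1 m.+1) \sum_(Y <- iota 1 m.+1) ((Y == p) * W X Y).
  by apply: eq_bigr => X _; rewrite big_iota_pred1.
have -> : \sum_(Y <- iota 1 m.+1) ((p < Y) * (Y - p <= t) * close k f p Y)
    = \sum_(X <- iota 1 m.+1) \sum_(Y <- iota 1 m.+1) ((X == p) * W X Y).
  rewrite -(big_iota_pred1 (fun X => \sum_(Y <- iota 1 m.+1) W X Y) Hp).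
  by apply: eq_bigr => X _; rewrite big_distrr.
rewrite -!big_split; apply: eq_bigr => X _.
rewrite big_distrr -!big_split; apply: eq_bigr => Y _ /=.
exact: window_indicator_split.
Qed.

Section RemoveMax.

Variables (k t m : nat) (f : nat -> int) (p : nat).
Hypothesis Hp : 1 <= p <= m.+1.
Hypothesis Hmax : forall x, 1 <= x <= m.+1 -> (f x <= f p)%R.

Lemma bump_le_max x : 1 <= x <= m -> (f (bump p x) <= f p)%R.
Proof. by move=> Hx; apply: Hmax; rewrite /bump; lia. Qed.

Lemma cnt_le_bump_max j : (f p <= j)%R -> cnt_le m (f \o bump p) j = m.
Proof.
move=> Hj; rewrite /cnt_le (eq_in_count (a2 := predT)) ?count_predT ?size_iota //.
by move=> x; rewrite mem_iota => Hx /=; apply: le_trans Hj; apply: bump_le_max.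
Qed.

Lemma is_Mu_bump_max g : is_Mu m.+1 f g -> is_Mu m (f \o bump p) g /\ g m.+1 = f p.
Proof.
move=> HM.
have cnt_leE x j : 1 <= x <= m ->
    (x <= cnt_le m (f \o bump p) j) = (x <= cnt_le m.+1 f j).
  move=> Hx; rewrite (cnt_le_bump _ _ Hp).
  have [Hj|Hj] /= := boolP (f p <= j)%R; last by rewrite addn0.
  by rewrite cnt_le_bump_max //; lia.
split.
  move=> x Hx; have [H1 H2] := HM x (ltac:(lia)).
  by split=> [|j]; rewrite /= cnt_leE //; apply: H2.
have [/= Hlast Hmin] := HM m.+1 (ltac:(lia)).
apply/le_anti/andP; split.
  by apply: Hmin; rewrite /= (cnt_le_bump _ _ Hp) cnt_le_bump_max // lexx; lia.
have [//|Hlt] := boolP (f p <= g m.+1)%R.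
move: Hlast; rewrite (cnt_le_bump _ _ Hp) (negbTE Hlt) addn0.
by have := cnt_le_size m (f \o bump p) (g m.+1); lia.
Qed.

Let K := m - cnt_le m (f \o bump p) (f p - (k.+1)%:Z)%R.
Let L := \sum_(X <- iota 1 m.+1) ((X < p) * (p - X <= t) * close k f X p).
Let R := \sum_(Y <- iota 1 m.+1) ((p < Y) * (Y - p <= t) * close k f p Y).
Let G := \sum_(X <- iota 1 m.+1) \sum_(Y <- iota 1 m.+1)
           ((X < p) * (p < Y) * (Y - X == t.+1) * close k f X Y).

Lemma sum_close_max : \sum_(X <- iota 1 m.+1) (X != p) * close k f X p = K.
Proof.
rewrite -(big_bump_iota (fun X => nat_of_bool (close k f X p)) Hp).
rewrite (sum_negb (fun x => Ek k (f (bump p x)) (f p))) size_iota.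
rewrite /K /cnt_le count_sum_nat; congr (_ - _).
by apply: eq_big_seq => x; rewrite mem_iota => Hx; rewrite /= Ek_le // bump_le_max.
Qed.

Lemma close_through_max_le : L + R <= K.
Proof.
rewrite -sum_close_max -big_split /=; apply: leq_sum => X _.
by rewrite /close Ek_sym; case: (~~ Ek k _ _); lia.
Qed.

Lemma close_through_max_eq : m.+1 <= t -> L + R = K.
Proof.
move=> Ht; rewrite -sum_close_max -big_split; apply: eq_big_seq => X.
by rewrite mem_iota /close Ek_sym => HX /=; case: (~~ Ek k _ _); lia.
Qed.

Lemma straddling_eq0 : m.+1 <= t -> G = 0.
Proof.
move=> Ht; rewrite /G big1_seq // => X; rewrite mem_iota => HX.
rewrite big1_seq // => Y; rewrite mem_iota => HY.
by rewrite (_ : (Y - X == t.+1) = false) ?muln0 //; lia.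
Qed.

Lemma straddling_ge : \sum_(d <- iota 1 t)
  (d < p) * ((p - d + t.+1 <= m.+1) * close k f (p - d) (p - d + t.+1)) <= G.
Proof.
pose F X := (X + t.+1 <= m.+1) * close k f X (X + t.+1).
rewrite -(@sum_iota_window_left m.+1 p t F) /F; last lia.
apply: leq_sum => X _.
rewrite mulnCA -(@big_iota_pred1_cond (X + t.+1) m.+1 (X + t.+1 <= m.+1)
           (fun Y => (X < p) * (p - X <= t) * close k f X Y)); last lia.
by apply: leq_sum => Y _; case: (close k f X Y); lia.
Qed.

Lemma close_through_max_le_straddling : L + R <= t + G.
Proof.
apply: leq_trans (leq_add (leqnn t) straddling_ge).
rewrite /L /R sum_iota_window_left ?sum_iota_window_right; try lia.
rewrite (sum_iota_rev t (fun d => (p + d <= m.+1) * close k f p (p + d))) -big_split /=.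
rewrite -[X in _ <= X + _](size_iota 1 t) -sum1_size -big_split /=.
rewrite big_seq [X in _ <= X]big_seq; apply: leq_sum => d; rewrite mem_iota => Hd.
have [Hdp|Hdp] := ltnP d p; last first.
  by rewrite !mul0n; case: (p + (t.+1 - d) <= m.+1); case: close.
have -> : p - d + t.+1 = p + (t.+1 - d) by lia.
have : (p + (t.+1 - d) <= m.+1) -> close k f (p - d) p -> close k f p (p + (t.+1 - d)) ->
       close k f (p - d) (p + (t.+1 - d)).
  by move=> Hb; rewrite /close [Ek k (f p) _]Ek_sym; apply: nEk_trans_le; apply: Hmax; lia.
by case: close; case: close; case: close; case: (_ <= _); lia.
Qed.

Lemma nclose_Mu_last g : is_Mu m.+1 f g ->
  nclose k t m.+1 g = nclose k t m g + minn t K.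
Proof.
move=> /is_Mu_bump_max[HM' Hg].
have := nclose_bump k g t (ltac:(lia) : 1 <= m.+1 <= m.+1).
have beyond_last Y : Y \in iota 1 m.+1 -> (m.+1 < Y) = false by rewrite mem_iota; lia.
rewrite [X in _ + X = _]big1_seq => [|X _]; last first.
  by rewrite big1_seq // => Y /beyond_last ->; rewrite muln0.
rewrite [X in _ = _ + X]big1_seq => [|Y /beyond_last -> //].
rewrite !addn0 => ->; congr (_ + _).
  by apply: eq_nclose => x; rewrite inE /= /bump => Hx; congr g; lia.
rewrite sum_iota_window_left // -sum_iota_leq.
apply: eq_big_seq => d; rewrite mem_iota => Hd.
have [Hdm|Hdm] /= := ltnP d m.+1; last by rewrite /K; lia.
have Hx : 1 <= m.+1 - d <= m by lia.
rewrite mul1n /close Hg Ek_le; last by rewrite (is_Mu_leE _ HM' Hx) cnt_le_bump_max //; lia.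
rewrite (is_Mu_leE _ HM' Hx) /K.
by have := cnt_le_size m (f \o bump p) (f p - (k.+1)%:Z)%R; lia.
Qed.

Lemma nclose_remove_max g : is_Mu m.+1 f g ->
  nclose k t m.+1 f + nclose k t m g <= nclose k t m (f \o bump p) + nclose k t m.+1 g
  /\ (m.+1 <= t ->
      nclose k t m.+1 f + nclose k t m g = nclose k t m (f \o bump p) + nclose k t m.+1 g).
Proof.
move=> /nclose_Mu_last ->.
have := nclose_bump k f t Hp; rewrite -/L -/R -/G => Hf.
have := close_through_max_le; have := close_through_max_le_straddling.
split=> [|Ht]; first lia.
by have := close_through_max_eq Ht; have := straddling_eq0 Ht; lia.
Qed.

End RemoveMax.

Lemma nclose_rearrangement k t n (u g : nat -> int) : is_Mu n u g ->
  nclose k t n u <= nclose k t n g /\ (n <= t -> nclose k t n u = nclose k t n g).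
Proof.
elim: n u g => [|m IH] u g HM; first by rewrite /nclose !big_nil.
have [p Hp Hmax] := exists_argmax u m.
have [HM' _] := is_Mu_bump_max Hp Hmax HM.
have [IHle IHeq] := IH _ _ HM'.
have [Hle Heq] := nclose_remove_max k t Hp Hmax HM.
split=> [|Ht]; first lia.
by have := IHeq (ltnW Ht); have := Heq Ht; lia.
Qed.

Section LayerCake.

Variables (R : realType) (n k : nat) (h : nat -> R).

Lemma layer_cake d : 1 <= d <= n.-1 ->
  h d = (h n.-1 + \sum_(0 <= t < n.-1) (h t - h t.+1) * (d <= t)%:R)%R.
Proof.
move=> Hd; rewrite (big_cat_nat (n := d)) //=; last lia.
rewrite big1_seq => [|t]; last first.
  by rewrite mem_index_iota ltnNge => /andP[_ /negbTE ->]; rewrite mulr0.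
rewrite add0r (telescope_sumr_eq (fun t => - h t)%R); [by rewrite opprK; ring | lia |].
move=> t Ht; rewrite (_ : d <= t); last lia.
by rewrite mulr1 opprK addrC.
Qed.

Definition Hclose (v : nat -> int) : R :=
  (\sum_(x <- iota 1 n) \sum_(y <- iota 1 n) ((x < y) * close k v x y)%:R * h (y - x))%R.

Lemma mulr_sum2_natr (c : R) (a : nat -> nat -> nat) s :
  (c * (\sum_(x <- s) \sum_(y <- s) a x y)%:R
   = \sum_(x <- s) \sum_(y <- s) c * (a x y)%:R)%R.
Proof.
rewrite natr_sum mulr_sumr; apply: eq_bigr => x _.
by rewrite natr_sum mulr_sumr.
Qed.

Lemma Hclose_layer_cake v : Hclose v = (h n.-1 * (nclose k n n v)%:R +
  \sum_(0 <= t < n.-1) (h t - h t.+1) * (nclose k t n v)%:R)%R.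
Proof.
rewrite /nclose mulr_sum2_natr.
under [X in _ = (_ + X)%R]eq_bigr => t _ do rewrite mulr_sum2_natr.
rewrite [X in _ = (_ + X)%R]exchange_big /=.
under [X in _ = (_ + X)%R]eq_bigr => x _ do rewrite exchange_big /=.
rewrite /Hclose -big_split /=; apply: eq_big_seq => x; rewrite mem_iota => Hx.
rewrite -big_split /=; apply: eq_big_seq => y; rewrite mem_iota => Hy.
have [Hxy|Hxy] := ltnP x y; last first.
  by rewrite !mul0n mul0r mulr0 add0r big1 // => t _; rewrite ?mul0n mulr0.
rewrite (_ : y - x <= n); last lia.
case: (close k v x y); last first.
  by rewrite !muln0 mul0r mulr0 add0r big1 // => t _; rewrite ?muln0 mulr0.
rewrite !mul1n mul1r mulr1 (@layer_cake (y - x)); last lia.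
congr (_ + _)%R; apply: eq_bigr => t _; by rewrite mul1n muln1.
Qed.

Lemma Hfun_Hclose v : Hfun n h (Ek k) v =
  (\sum_(x <- iota 1 n) \sum_(y <- iota 1 n) (x < y)%:R * h (y - x) - Hclose v)%R.
Proof.
rewrite /Hfun /J big_filter big_mkcond big_allpairs /Hclose -sumrB.
apply: eq_bigr => x _; rewrite -sumrB; apply: eq_bigr => y _ /=.
have [Hxy|Hxy|<-] /= := ltngtP x y; last by rewrite Ek_xx !mul0r subrr.
  by rewrite /close; case: Ek; rewrite /= ?mul0r ?subr0 mul1r ?subrr.
by rewrite !mul0r subrr.
Qed.

End LayerCake.

Local Open Scope ring_scope.

Theorem theorem2p2 (R : realType) (n k : nat) (h : nat -> R)
  (u Mu : nat -> int) :
  (0 < n)%N -> (0 < k)%N ->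
  (forall a b : nat, (a <= b)%N -> (b <= n - 1)%N -> h b <= h a) ->
  is_Mu n u Mu ->
  Hfun n h (Ek k) Mu <= Hfun n h (Ek k) u.
Proof.
move=> _ _ h_nonincr HM.
rewrite !Hfun_Hclose lerD2l lerN2 !Hclose_layer_cake.
have [_ ->] := nclose_rearrangement k n HM; last exact: leqnn.
rewrite lerD2l; apply: ler_sum_nat => t Ht; apply: ler_wpM2l.
  by rewrite subr_ge0; apply: h_nonincr; lia.
by rewrite ler_nat; have [] := nclose_rearrangement k t HM.
Qed.
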